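(* Let $\rho_p>0$, $\bar\rho_{ac}>0$, $\bar v_a>0$, $\bar u_d>0$, $C_D>0$, $\rho_{sn,p}>0$, $\Delta T^g_d\ge 0$ and an integer $\delta\ge 2$ be given. Let $\mathbf{r}_{d1},\dots,\mathbf{r}_{dN_d}\in\mathbb{R}^3$ ($N_d\ge2$) be pairwise distinct points, i.e. $\|\mathbf{r}_{dj}-\mathbf{r}_{dj'}\|>0$ for $j\ne j'$, and let $\mathbf{u}\in\mathbb{R}^3$ be a unit vector. For $R\ge 0$ define $\varrho_j(R)=\|R\mathbf{u}-\mathbf{r}_{dj}\|$, $\tilde\varrho_\delta(R)=\big(\sum_{j=1}^{N_d}\varrho_j(R)^\delta\big)^{1/\delta}$, $\bar\varrho_d(R)=\tilde\varrho_\delta(R)+\rho_{sn,p}$, and $$\bar T_d(\varrho)=\frac{1}{\lambda_0}\Big(\tanh^{-1}\!\big(\tfrac{v_{sw}(\varrho)}{\bar v_d}\big)+\tan^{-1}\!\big(\tfrac{v_{sw}(\varrho)}{\bar v_d}\big)\Big),$$ where $\lambda_0=\sqrt{\bar u_d C_D}$, $\bar v_d=\sqrt{\bar u_d/C_D}$, $v_{sw}(\varrho)=\sqrt{\frac{(\lambda-1)\bar u_d}{(\lambda+1)C_D}}$ with $\lambda=e^{2C_D\varrho}$. Define $$f(R)=\bar\rho_{ac}+R+\bar v_a\big(\bar T_d(\bar\varrho_d(R))+\Delta T^g_d\big).$$ Let $R^*$ be a point with $R^*>0$ at which $\frac{d\tilde\varrho_\delta}{dR}(R^* )=0$ (a minimizer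 of $\tilde\varrho_\delta$). Then $f$ is locally convex around $R^*$: there exists $\epsilon>0$ such that $\frac{d^2 f}{dR^2}(R)>0$ for all $R$ with $|R-R^*|<\epsilon$.
   Context: Interpretation: the protected area is a ball of radius $\rho_p$ centered at the origin; $\mathbf{r}_{dj}$ are defender positions; $\mathbf{u}$ is the direction of the attackers' center of mass, and $R\mathbf{u}$ is a candidate gathering center at distance $R$ from the origin on the attackers' shortest path to the protected area. $\varrho_j(R)$ is the distance of defender $j$ to the gathering center; $\tilde\varrho_\delta$ is an upper approximation of $\max_j\varrho_j$; $\rho_{sn,p}$ is the radius of the planar gathering formation; $\bar T_d(\varrho)$ is the time-optimal travel time over distance $\varrho$ for an agent with acceleration bound $\bar u_d$ and quadratic drag coefficient $C_D$ starting from rest; $\bar v_a$ is the attackers' maximum speed; $\bar\rho_{ac}$ is the maximum connectivity radius of the attacker swarm. *)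

From Stdlib Require Import Reals Lra.
From Coquelicot Require Import Coquelicot.
Open Scope R_scope.

Definition vec3 : Type := (R * R * R)%type.
Definition vx (v : vec3) : R := fst (fst v).
Definition vy (v : vec3) : R := snd (fst v).
Definition vz (v : vec3) : R := snd v.
Definition norm3 (v : vec3) : R := sqrt (vx v ^ 2 + vy v ^ 2 + vz v ^ 2).
Definition sub3 (a b : vec3) : vec3 := (vx a - vx b, vy a - vy b, vz a - vz b).
Definition scal3 (k : R) (a : vec3) : vec3 := (k * vx a, k * vy a, k * vz a).

(* inverse hyperbolic tangent, for |x| < 1 *)
Definition artanh (x : R) : R := / 2 * ln ((1 + x) / (1 - x)).

Definition varrho (u : vec3) (rd : nat -> vec3) (j : nat) (Rr : R) : R :=
  norm3 (sub3 (scal3 Rr u) (rd j)).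

(* tilde varrho_delta(R) = (sum_{j=1}^{N_d} varrho_j(R)^delta)^(1/delta);
   defenders are indexed 0 .. Nd-1 *)
Definition varrho_tilde (delta Nd : nat) (u : vec3) (rd : nat -> vec3) (Rr : R) : R :=
  Rpower (sum_f_R0 (fun j => varrho u rd j Rr ^ delta) (Nd - 1)) (/ INR delta).

Definition lambda0 (ud CD : R) : R := sqrt (ud * CD).
Definition vbar_d (ud CD : R) : R := sqrt (ud / CD).
Definition v_sw (ud CD rho : R) : R :=
  let lam := exp (2 * CD * rho) in
  sqrt (((lam - 1) * ud) / ((lam + 1) * CD)).
Definition Tbar_d (ud CD rho : R) : R :=
  / lambda0 ud CD *
  (artanh (v_sw ud CD rho / vbar_d ud CD) + atan (v_sw ud CD rho / vbar_d ud CD)).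

Definition f_gather (rho_ac va ud CD rho_snp DTg : R) (delta Nd : nat)
  (u : vec3) (rd : nat -> vec3) (Rr : R) : R :=
  rho_ac + Rr +
  va * (Tbar_d ud CD (varrho_tilde delta Nd u rd Rr + rho_snp) + DTg).

From Stdlib Require Import Reals Lra Lia.
From Coquelicot Require Import Coquelicot.
Open Scope R_scope.

(* Write S(R) = sum_j varrho_j(R)^delta, so that tilde varrho_delta = g = S^a
   with a = 1/delta, and f(R) = const + R + v_a T(g(R) + rho_sn,p).
   The argument needs only qualitative bounds on each ingredient:
   - the travel time satisfies T'(rho) = C_D / (lambda_0 sqrt (tanh (C_D rho))),
     hence K <= T' <= U and |T''| <= B on (rho_sn,p, +oo) for constants
     0 < K <= U and B;
   - S'' >= m > 0, because every varrho_j^delta is convex (varrho_j is the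
     distance to a point of the line R u) and two distinct defenders cannot
     both be within half their separation of R u;
   - at the critical point, g' = 0 forces S' = 0.
   These bounds give f'' >= v_a (g a / S) (K m - M) with a margin
   M = S'^2 / S (B a g + U) that is continuous and vanishes at R*, so f'' > 0
   near R*. *)

(* A product (t - c) phi(t) with phi merely continuous is differentiable at c;
   this handles the powers of distances at a defender lying on the line. *)
Lemma is_derive_linear_factor (phi : R -> R) c :
  continuous phi c -> is_derive (fun t => (t - c) * phi t) c (phi c).
Proof.
  intros Hphi; apply is_derive_Reals; intros eps Heps.
  apply continuity_pt_filterlim in Hphi.
  destruct (Hphi eps Heps) as [alp [Halp Hclose]].
  exists (mkposreal alp Halp); intros h Hh Hsmall; simpl in Hsmall.
  replace (((c + h - c) * phi (c + h) - (c - c) * phi c) / h - phi c)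
    with (phi (c + h) - phi c) by (field; auto).
  apply (Hclose (c + h)); split; [split; [exact I | lra]|].
  simpl; unfold R_dist; now replace (c + h - c) with h by ring.
Qed.

Lemma continuous_pow (f : R -> R) x k : continuous f x -> continuous (fun t => f t ^ k) x.
Proof.
  intros Hf; induction k as [|k IH]; simpl; [apply continuous_const|].
  now apply (continuous_mult f (fun t => f t ^ k)).
Qed.

Lemma continuous_lt_near (h : R -> R) x c :
  continuous h x -> h x < c -> exists eps, 0 < eps /\ forall y, Rabs (y - x) < eps -> h y < c.
Proof.
  intros Hh Hlt.
  destruct (proj1 (filterlim_locally h (h x)) Hh (mkposreal (c - h x) ltac:(lra))) as [eps Heps].
  exists eps; split; [apply cond_pos|]; intros y Hy.
  specialize (Heps y Hy); simpl in Heps; unfold ball in Heps; simpl in Heps.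
  unfold AbsRing_ball, abs, minus, plus, opp in Heps; simpl in Heps.
  assert (Hab := Rle_abs (h y + - h x)); lra.
Qed.

Lemma is_derive_sum_f_R0 (F : nat -> R -> R) (dF : nat -> R) x n :
  (forall j, (j <= n)%nat -> is_derive (F j) x (dF j)) ->
  is_derive (fun y => sum_f_R0 (fun j => F j y) n) x (sum_f_R0 dF n).
Proof.
  intros HF; rewrite <- sum_n_Reals.
  apply (is_derive_ext (fun y => sum_n (fun j => F j y) n)); [intro y; apply sum_n_Reals|].
  now apply (@is_derive_sum_n R_AbsRing R_NormedModule).
Qed.

Lemma sum_f_R0_ge_term (F : nat -> R) n j : (forall i, 0 <= F i) -> (j <= n)%nat ->
  F j <= sum_f_R0 F n.
Proof.
  intros HF; induction n as [|n IH]; intros Hj; simpl.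
  - replace j with 0%nat by lia; lra.
  - destruct (Nat.eq_dec j (S n)) as [->|Hne].
    + assert (0 <= sum_f_R0 F n) by (apply cond_pos_sum; auto); lra.
    + assert (F j <= sum_f_R0 F n) by (apply IH; lia); specialize (HF (S n)); lra.
Qed.

(* tanh_drag CD r = tanh (C_D r); the switching speed is v_sw = vbar_d sqrt (tanh_drag). *)
Definition tanh_drag (CD r : R) : R := (exp (2 * CD * r) - 1) / (exp (2 * CD * r) + 1).

(* The form 1 - 2 / (e^(2 C_D r) + 1) makes bounds and monotonicity evident. *)
Lemma tanh_drag_alt CD r : tanh_drag CD r = 1 - 2 / (exp (2 * CD * r) + 1).
Proof.
  unfold tanh_drag; assert (0 < exp (2 * CD * r)) by apply exp_pos; field; lra.
Qed.

Lemma tanh_drag_bounds CD r : 0 < CD -> 0 < r -> 0 < tanh_drag CD r < 1.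
Proof.
  intros HCD Hr; rewrite tanh_drag_alt.
  assert (1 < exp (2 * CD * r)) by (rewrite <- exp_0; apply exp_increasing; nra).
  assert (2 / (exp (2 * CD * r) + 1) < 1) by (apply Rlt_div_l; lra).
  assert (0 < 2 / (exp (2 * CD * r) + 1)) by (apply Rdiv_lt_0_compat; lra).
  lra.
Qed.

Lemma tanh_drag_mono CD r0 r : 0 < CD -> r0 <= r -> tanh_drag CD r0 <= tanh_drag CD r.
Proof.
  intros HCD Hr; rewrite !tanh_drag_alt.
  assert (exp (2 * CD * r0) <= exp (2 * CD * r)).
  { destruct (Req_dec r0 r) as [->|]; [lra|]. apply Rlt_le, exp_increasing; nra. }
  assert (0 < exp (2 * CD * r0)) by apply exp_pos.
  assert (/ (exp (2 * CD * r) + 1) <= / (exp (2 * CD * r0) + 1)) by (apply Rinv_le_contravar; lra).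
  unfold Rdiv; lra.
Qed.

Lemma tanh_drag_derive CD r :
  is_derive (tanh_drag CD) r (CD * (1 - tanh_drag CD r ^ 2)).
Proof.
  unfold tanh_drag.
  assert (0 < exp (2 * CD * r)) by apply exp_pos.
  auto_derive; [lra|].
  set (E := exp (2 * CD * r)); field; unfold E; lra.
Qed.

Lemma speed_ratio ud CD r : 0 < ud -> 0 < CD ->
  v_sw ud CD r / vbar_d ud CD = sqrt (tanh_drag CD r).
Proof.
  intros Hud HCD; unfold v_sw, vbar_d, tanh_drag.
  assert (0 < exp (2 * CD * r)) by apply exp_pos.
  set (E := exp (2 * CD * r)) in *.
  assert (0 < sqrt (ud / CD)) by (apply sqrt_lt_R0, Rdiv_lt_0_compat; lra).
  replace ((E - 1) * ud / ((E + 1) * CD)) with ((E - 1) / (E + 1) * (ud / CD)) by (field; lra).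
  assert (0 < ud / CD) by (apply Rdiv_lt_0_compat; lra).
  destruct (Rle_or_lt 0 ((E - 1) / (E + 1))).
  - rewrite sqrt_mult by lra. field; lra.
  - rewrite (sqrt_neg_0 ((E - 1) / (E + 1) * (ud / CD))), (sqrt_neg_0 ((E - 1) / (E + 1))) by nra.
    field; lra.
Qed.

Lemma sqrt_tanh_drag_bounds CD r : 0 < CD -> 0 < r -> 0 < sqrt (tanh_drag CD r) < 1.
Proof.
  intros HCD Hr; destruct (tanh_drag_bounds CD r HCD Hr).
  split; [apply sqrt_lt_R0; lra|]. rewrite <- sqrt_1; apply sqrt_lt_1; lra.
Qed.

Lemma sqrt_tanh_drag_derive CD r : 0 < CD -> 0 < r ->
  is_derive (fun t => sqrt (tanh_drag CD t)) r
    (CD * (1 - tanh_drag CD r ^ 2) / (2 * sqrt (tanh_drag CD r))).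
Proof.
  intros HCD Hr; apply is_derive_sqrt; [apply tanh_drag_derive|].
  now apply tanh_drag_bounds.
Qed.

Lemma artanh_derive x : -1 < x < 1 -> is_derive artanh x (/ (1 - x ^ 2)).
Proof.
  intros Hx; unfold artanh; auto_derive.
  - repeat split; try lra; apply Rdiv_lt_0_compat; lra.
  - field; repeat split; try lra; nra.
Qed.

Lemma lambda0_pos ud CD : 0 < ud -> 0 < CD -> 0 < lambda0 ud CD.
Proof. intros; unfold lambda0; apply sqrt_lt_R0; nra. Qed.

(* The derivative of the travel time: the derivatives of artanh and atan add up
   to 2 / (1 - s^4), which cancels the factor 1 - tanh^2 of the inner derivative. *)
Definition dTbar (ud CD r : R) : R := CD / lambda0 ud CD / sqrt (tanh_drag CD r).

Lemma Tbar_d_derive ud CD r : 0 < ud -> 0 < CD -> 0 < r ->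
  is_derive (Tbar_d ud CD) r (dTbar ud CD r).
Proof.
  intros Hud HCD Hr.
  destruct (tanh_drag_bounds CD r HCD Hr) as [w0 w1].
  assert (Hs := sqrt_tanh_drag_bounds CD r HCD Hr).
  assert (Hss : sqrt (tanh_drag CD r) ^ 2 = tanh_drag CD r) by (apply pow2_sqrt; lra).
  assert (Hl := lambda0_pos ud CD Hud HCD).
  apply (is_derive_ext (fun t => / lambda0 ud CD *
           (artanh (sqrt (tanh_drag CD t)) + atan (sqrt (tanh_drag CD t))))).
  { intro t; unfold Tbar_d; now rewrite speed_ratio. }
  set (s := sqrt (tanh_drag CD r)) in *.
  set (ds := CD * (1 - tanh_drag CD r ^ 2) / (2 * s)).
  replace (dTbar ud CD r) with (/ lambda0 ud CD * (ds * / (1 - s ^ 2) + ds * / (1 + s²))).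
  2:{ unfold dTbar, ds, Rsqr; fold s; rewrite <- Hss; field; repeat split; nra. }
  apply is_derive_scal, (is_derive_plus (fun t => artanh _) (fun t => atan _)).
  - apply (is_derive_comp artanh); [apply artanh_derive; lra|].
    now apply sqrt_tanh_drag_derive.
  - apply (is_derive_comp atan); [apply is_derive_atan|].
    now apply sqrt_tanh_drag_derive.
Qed.

Lemma dTbar_lower ud CD r : 0 < ud -> 0 < CD -> 0 < r ->
  CD / lambda0 ud CD <= dTbar ud CD r.
Proof.
  intros Hud HCD Hr; unfold dTbar.
  assert (0 < CD / lambda0 ud CD) by (apply Rdiv_lt_0_compat, lambda0_pos; auto).
  destruct (sqrt_tanh_drag_bounds CD r HCD Hr).
  rewrite <- (Rdiv_1_r (CD / lambda0 ud CD)) at 1.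
  apply Rmult_le_compat_l; [lra|]. apply Rinv_le_contravar; lra.
Qed.

Lemma dTbar_antitone ud CD r0 r : 0 < ud -> 0 < CD -> 0 < r0 -> r0 <= r ->
  dTbar ud CD r <= dTbar ud CD r0.
Proof.
  intros Hud HCD Hr0 Hr; unfold dTbar.
  assert (0 < CD / lambda0 ud CD) by (apply Rdiv_lt_0_compat, lambda0_pos; auto).
  assert (sqrt (tanh_drag CD r0) <= sqrt (tanh_drag CD r)) by (apply sqrt_le_1_alt, tanh_drag_mono; lra).
  destruct (sqrt_tanh_drag_bounds CD r0 HCD Hr0).
  apply Rmult_le_compat_l; [lra|]. apply Rinv_le_contravar; lra.
Qed.

Definition dTbar_lip (ud CD r0 : R) : R :=
  CD / lambda0 ud CD * CD / (2 * sqrt (tanh_drag CD r0) ^ 3).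

Lemma dTbar_derive_bound ud CD r0 r : 0 < ud -> 0 < CD -> 0 < r0 -> r0 <= r ->
  ex_derive (dTbar ud CD) r /\ Rabs (Derive (dTbar ud CD) r) <= dTbar_lip ud CD r0.
Proof.
  intros Hud HCD Hr0 Hr.
  assert (HK : 0 < CD / lambda0 ud CD) by (apply Rdiv_lt_0_compat, lambda0_pos; auto).
  destruct (tanh_drag_bounds CD r HCD ltac:(lra)) as [w0 w1].
  destruct (sqrt_tanh_drag_bounds CD r HCD ltac:(lra)) as [s_pos _].
  destruct (sqrt_tanh_drag_bounds CD r0 HCD Hr0) as [s0_pos _].
  assert (Hs0s : sqrt (tanh_drag CD r0) <= sqrt (tanh_drag CD r))
    by (apply sqrt_le_1_alt, tanh_drag_mono; lra).
  set (s := sqrt (tanh_drag CD r)) in *; set (s0 := sqrt (tanh_drag CD r0)) in *.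
  assert (Hd : is_derive (dTbar ud CD) r
                 (- (CD / lambda0 ud CD * CD * (1 - tanh_drag CD r ^ 2) / (2 * s ^ 3)))).
  { apply (is_derive_ext (fun t => CD / lambda0 ud CD * / sqrt (tanh_drag CD t))); [reflexivity|].
    evar (d : R); replace (- _) with d; [apply is_derive_scal, is_derive_inv;
      [apply sqrt_tanh_drag_derive; lra | fold s; lra]|].
    unfold d; fold s; field; split; [apply Rgt_not_eq, lambda0_pos|]; lra. }
  split; [eexists; exact Hd|].
  rewrite (is_derive_unique _ _ _ Hd), Rabs_Ropp, Rabs_pos_eq.
  2:{ apply Rmult_le_pos; [|apply Rlt_le, Rinv_0_lt_compat, Rmult_lt_0_compat, pow_lt; lra].
      apply Rmult_le_pos; [nra|]. assert (tanh_drag CD r ^ 2 < 1) by nra; lra. }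
  unfold dTbar_lip; fold s0.
  assert (Hinv : / (2 * s ^ 3) <= / (2 * s0 ^ 3)).
  { apply Rinv_le_contravar; [apply Rmult_lt_0_compat, pow_lt; lra|].
    apply Rmult_le_compat_l, pow_incr; lra. }
  assert (0 < / (2 * s ^ 3)) by (apply Rinv_0_lt_compat, Rmult_lt_0_compat, pow_lt; lra).
  assert (HKC : 0 < CD / lambda0 ud CD * CD) by nra.
  assert (0 <= tanh_drag CD r ^ 2 < 1) by (split; nra).
  set (KC := CD / lambda0 ud CD * CD) in *.
  unfold Rdiv; apply Rmult_le_compat; nra.
Qed.

(* line_dist c e t = sqrt ((t - c)^2 + e) is the distance from the point t u of a
   unit line to a point at abscissa c and squared distance e from the line. *)
Definition line_dist (c e t : R) : R := sqrt ((t - c) ^ 2 + e).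

Lemma line_dist_continuous c e t : continuous (line_dist c e) t.
Proof.
  apply continuous_sqrt_comp.
  apply (ex_derive_continuous (fun t => (t - c) ^ 2 + e)); auto_derive; auto.
Qed.

Lemma line_dist_derive c e t : 0 < (t - c) ^ 2 + e ->
  is_derive (line_dist c e) t ((t - c) / line_dist c e t).
Proof.
  intros Hq.
  assert (HN : 0 < line_dist c e t) by (apply sqrt_lt_R0; lra).
  replace ((t - c) / line_dist c e t) with (2 * (t - c) / (2 * line_dist c e t)) by (field; lra).
  apply (is_derive_sqrt (fun t => (t - c) ^ 2 + e)); [|exact Hq].
  auto_derive; [exact I | ring].
Qed.

Lemma line_dist_sq c e t : 0 <= e -> line_dist c e t ^ 2 = (t - c) ^ 2 + e.
Proof. intros He; apply pow2_sqrt; assert (0 <= (t - c) ^ 2) by apply pow2_ge_0; lra. Qed.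

Lemma line_dist_vanishing c e t : 0 <= e -> (t - c) ^ 2 + e <= 0 -> e = 0 /\ t = c.
Proof.
  intros He Hq; assert (Hsq : 0 <= (t - c) ^ 2) by apply pow2_ge_0.
  assert (Hz : (t - c) ^ 2 = 0) by lra; simpl in Hz; split; [lra | nra].
Qed.

Lemma line_dist_pow_derive c e k t : 0 <= e ->
  is_derive (fun s => line_dist c e s ^ (k + 2)) t
    (INR (k + 2) * (t - c) * line_dist c e t ^ k).
Proof.
  intros He; destruct (Rlt_or_le 0 ((t - c) ^ 2 + e)) as [Hq|Hq].
  - assert (HN : 0 < line_dist c e t) by (apply sqrt_lt_R0; lra).
    replace (INR (k + 2) * (t - c) * line_dist c e t ^ k)
      with (INR (k + 2) * ((t - c) / line_dist c e t) * line_dist c e t ^ Nat.pred (k + 2)).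
    + now apply is_derive_pow, line_dist_derive.
    + replace (Nat.pred (k + 2)) with (S k) by lia; simpl; field; lra.
  - destruct (line_dist_vanishing c e t He Hq) as [-> ->].
    assert (Hform : forall s, (s - c) * ((s - c) * line_dist c 0 s ^ k) = line_dist c 0 s ^ (k + 2))
      by (intro s; rewrite pow_add, line_dist_sq by lra; ring).
    apply (is_derive_ext _ _ _ _ Hform).
    replace (INR (k + 2) * (c - c) * line_dist c 0 c ^ k)
      with ((c - c) * line_dist c 0 c ^ k) by ring.
    apply (is_derive_linear_factor (fun s => (s - c) * line_dist c 0 s ^ k)).
    apply (continuous_mult (fun s => s - c) (fun s => line_dist c 0 s ^ k)).
    + apply (ex_derive_continuous (fun s => s - c)); auto_derive; auto.
    + apply continuous_pow, line_dist_continuous.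
Qed.

Lemma line_dist_pow_derive2 c e k t : 0 <= e ->
  ex_derive (fun s => INR (k + 2) * (s - c) * line_dist c e s ^ k) t /\
  INR (k + 2) * line_dist c e t ^ k
    <= Derive (fun s => INR (k + 2) * (s - c) * line_dist c e s ^ k) t.
Proof.
  intros He.
  assert (Hk : 0 < INR (k + 2)) by (apply lt_0_INR; lia).
  enough (exists v, is_derive (fun s => INR (k + 2) * (s - c) * line_dist c e s ^ k) t v /\
                    INR (k + 2) * line_dist c e t ^ k <= v) as [v [Hv Hle]].
  { split; [now exists v|]. erewrite is_derive_unique; [exact Hle | exact Hv]. }
  destruct (Rlt_or_le 0 ((t - c) ^ 2 + e)) as [Hq|Hq].
  - assert (HN : 0 < line_dist c e t) by (apply sqrt_lt_R0; lra).
    assert (Hlin : is_derive (fun s => INR (k + 2) * (s - c)) t (INR (k + 2)))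
      by (auto_derive; [exact I | ring]).
    assert (Hpow := is_derive_pow _ k _ _ (line_dist_derive c e t Hq)).
    eexists; split; [exact (is_derive_mult _ _ _ _ _ Hlin Hpow Rmult_comm)|].
    set (N := line_dist c e t) in *.
    assert (Hrest : 0 <= INR (k + 2) * (t - c) * (INR k * ((t - c) / N) * N ^ Nat.pred k)).
    { replace (INR (k + 2) * (t - c) * (INR k * ((t - c) / N) * N ^ Nat.pred k))
        with (INR (k + 2) * INR k * (t - c) ^ 2 * / N * N ^ Nat.pred k) by (field; lra).
      assert (0 <= INR k) by apply pos_INR.
      assert (0 <= (t - c) ^ 2) by apply pow2_ge_0.
      apply Rmult_le_pos; [apply Rmult_le_pos; [|apply Rlt_le, Rinv_0_lt_compat; lra]|apply pow_le; lra].
      apply Rmult_le_pos; [apply Rmult_le_pos|]; lra. }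
    change (INR (k + 2) * N ^ k
            <= INR (k + 2) * N ^ k + INR (k + 2) * (t - c) * (INR k * ((t - c) / N) * N ^ Nat.pred k)).
    lra.
  - destruct (line_dist_vanishing c e t He Hq) as [-> ->].
    exists (INR (k + 2) * line_dist c 0 c ^ k); split; [|lra].
    assert (Hform : forall s, (s - c) * (INR (k + 2) * line_dist c 0 s ^ k)
                              = INR (k + 2) * (s - c) * line_dist c 0 s ^ k)
      by (intro s; ring).
    apply (is_derive_ext _ _ _ _ Hform).
    apply (is_derive_linear_factor (fun s => INR (k + 2) * line_dist c 0 s ^ k)).
    apply (continuous_mult (fun _ => INR (k + 2)) (fun s => line_dist c 0 s ^ k)).
    + apply continuous_const.
    + apply continuous_pow, line_dist_continuous.
Qed.

(* proj_coord u r = <u, r> is the abscissa of the projection of r on the line R u,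
   and line_gap u r the squared distance from r to that line. *)
Definition proj_coord (u r : vec3) : R := vx u * vx r + vy u * vy r + vz u * vz r.

Definition line_gap (u r : vec3) : R :=
  (vx r - proj_coord u r * vx u) ^ 2 + (vy r - proj_coord u r * vy u) ^ 2
  + (vz r - proj_coord u r * vz u) ^ 2.

Lemma line_gap_nonneg u r : 0 <= line_gap u r.
Proof.
  unfold line_gap.
  assert (H1 := pow2_ge_0 (vx r - proj_coord u r * vx u)).
  assert (H2 := pow2_ge_0 (vy r - proj_coord u r * vy u)).
  assert (H3 := pow2_ge_0 (vz r - proj_coord u r * vz u)). lra.
Qed.

Lemma varrho_line_dist u rd j t : norm3 u = 1 ->
  varrho u rd j t = line_dist (proj_coord u (rd j)) (line_gap u (rd j)) t.
Proof.
  unfold varrho, line_dist, line_gap, proj_coord, norm3, sub3, scal3, vx, vy, vz.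
  destruct u as [[a b] c]; destruct (rd j) as [[x y] z]; cbn [fst snd]; intros Hu.
  assert (Hunit : a ^ 2 + b ^ 2 + c ^ 2 = 1).
  { assert (0 <= a ^ 2 + b ^ 2 + c ^ 2) by (assert (H1 := pow2_ge_0 a);
      assert (H2 := pow2_ge_0 b); assert (H3 := pow2_ge_0 c); lra).
    rewrite <- (sqrt_sqrt _ H), Hu; ring. }
  f_equal; set (p := a * x + b * y + c * z).
  transitivity ((t - p) ^ 2 + ((x - p * a) ^ 2 + (y - p * b) ^ 2 + (z - p * c) ^ 2)
                + (a ^ 2 + b ^ 2 + c ^ 2 - 1) * (t ^ 2 - p ^ 2)); [unfold p; ring|].
  rewrite Hunit; ring.
Qed.

Lemma half_separation (p a b : vec3) :
  norm3 (sub3 a b) / 2 <= norm3 (sub3 p a) \/ norm3 (sub3 a b) / 2 <= norm3 (sub3 p b).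
Proof.
  unfold norm3, sub3, vx, vy, vz.
  destruct p as [[x y] z]; destruct a as [[xa ya] za]; destruct b as [[xb yb] zb]; cbn [fst snd].
  set (Y := (xa - xb) ^ 2 + (ya - yb) ^ 2 + (za - zb) ^ 2).
  set (Xa := (x - xa) ^ 2 + (y - ya) ^ 2 + (z - za) ^ 2).
  set (Xb := (x - xb) ^ 2 + (y - yb) ^ 2 + (z - zb) ^ 2).
  assert (HY : 0 <= Y) by (unfold Y; assert (H1 := pow2_ge_0 (xa - xb));
    assert (H2 := pow2_ge_0 (ya - yb)); assert (H3 := pow2_ge_0 (za - zb)); lra).
  (* parallelogram law: 2 Xa + 2 Xb - Y = |2 p - a - b|^2 *)
  assert (Hpar : Y <= 2 * Xa + 2 * Xb).
  { assert (H1 := pow2_ge_0 (2 * x - xa - xb)); assert (H2 := pow2_ge_0 (2 * y - ya - yb));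
    assert (H3 := pow2_ge_0 (2 * z - za - zb)).
    enough (2 * Xa + 2 * Xb - Y = (2 * x - xa - xb) ^ 2 + (2 * y - ya - yb) ^ 2 + (2 * z - za - zb) ^ 2)
      by lra.
    unfold Xa, Xb, Y; ring. }
  assert (Hhalf : sqrt Y / 2 = sqrt (Y / 4)).
  { replace (Y / 4) with (Y * / 2 ^ 2) by field.
    rewrite sqrt_mult_alt, sqrt_inv, sqrt_pow2; [reflexivity|lra|lra]. }
  rewrite Hhalf; destruct (Rle_or_lt (Y / 4) Xa); [left | right]; apply sqrt_le_1_alt; lra.
Qed.

Section DefenderPowerSum.

Variables (u : vec3) (rd : nat -> vec3) (k n : nat).
Hypothesis Hu : norm3 u = 1.

Definition dist_pow_deriv (j : nat) (t : R) : R :=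
  INR (k + 2) * (t - proj_coord u (rd j))
  * line_dist (proj_coord u (rd j)) (line_gap u (rd j)) t ^ k.

Definition power_sum (t : R) : R := sum_f_R0 (fun j => varrho u rd j t ^ (k + 2)) n.

Definition power_sum_d1 (t : R) : R := sum_f_R0 (fun j => dist_pow_deriv j t) n.

Definition power_sum_d2 (t : R) : R := sum_f_R0 (fun j => Derive (dist_pow_deriv j) t) n.

Lemma power_sum_derive t : is_derive power_sum t (power_sum_d1 t).
Proof.
  apply is_derive_sum_f_R0; intros j _.
  apply (is_derive_ext (fun s => line_dist (proj_coord u (rd j)) (line_gap u (rd j)) s ^ (k + 2))).
  - intro s; now rewrite varrho_line_dist.
  - apply line_dist_pow_derive, line_gap_nonneg.
Qed.

Lemma power_sum_d1_derive t : is_derive power_sum_d1 t (power_sum_d2 t).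
Proof.
  apply is_derive_sum_f_R0; intros j _.
  apply Derive_correct, line_dist_pow_derive2, line_gap_nonneg.
Qed.

Hypothesis Hsep : 0 < norm3 (sub3 (rd 0%nat) (rd 1%nat)).
Hypothesis Hn : (1 <= n)%nat.

Lemma far_defender t : exists j, (j <= n)%nat /\
  norm3 (sub3 (rd 0%nat) (rd 1%nat)) / 2 <= varrho u rd j t.
Proof.
  destruct (half_separation (scal3 t u) (rd 0%nat) (rd 1%nat)) as [H|H];
    [exists 0%nat | exists 1%nat]; split; auto; lia.
Qed.

Lemma power_sum_pos t : 0 < power_sum t.
Proof.
  destruct (far_defender t) as [j [Hj Hfar]].
  apply Rlt_le_trans with (varrho u rd j t ^ (k + 2)); [apply pow_lt; lra|].
  apply (sum_f_R0_ge_term (fun i => varrho u rd i t ^ (k + 2))); auto.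
  intro i; apply pow_le, sqrt_pos.
Qed.

Lemma power_sum_d2_lower t :
  INR (k + 2) * (norm3 (sub3 (rd 0%nat) (rd 1%nat)) / 2) ^ k <= power_sum_d2 t.
Proof.
  destruct (far_defender t) as [j [Hj Hfar]].
  assert (Hk : 0 < INR (k + 2)) by (apply lt_0_INR; lia).
  set (N i := line_dist (proj_coord u (rd i)) (line_gap u (rd i)) t).
  apply Rle_trans with (sum_f_R0 (fun i => INR (k + 2) * N i ^ k) n).
  - apply Rle_trans with (INR (k + 2) * N j ^ k).
    + apply Rmult_le_compat_l; [lra|]. apply pow_incr.
      unfold N; rewrite <- varrho_line_dist by auto; lra.
    + apply (sum_f_R0_ge_term (fun i => INR (k + 2) * N i ^ k)); auto.
      intro i; apply Rmult_le_pos; [lra | apply pow_le, sqrt_pos].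
  - apply sum_Rle; intros i _; apply line_dist_pow_derive2, line_gap_nonneg.
Qed.

End DefenderPowerSum.

Lemma curvature_lower_bound g s s1 s2 a tpp t1 K U B m :
  0 < g -> 0 < s -> 0 < a -> 0 <= K -> 0 <= m ->
  Rabs tpp <= B -> K <= t1 <= U -> m <= s2 ->
  g * a / s * (K * m - s1 ^ 2 / s * (B * a * g + U))
  <= tpp * (g * (a * (s1 / s))) ^ 2 + t1 * (g * ((a * (s1 / s)) ^ 2 + a * (s2 / s - (s1 / s) ^ 2))).
Proof.
  intros Hg Hs Ha HK Hm Htpp Ht1 Hs2.
  assert (Htpp' : - B <= tpp) by (assert (Hab := Rle_abs (- tpp)); rewrite Rabs_Ropp in Hab; lra).
  set (q := s1 / s); set (w := s2 / s).
  replace (s1 ^ 2 / s) with (q ^ 2 * s) by (unfold q; field; lra).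
  replace (g * a / s * K * m) with (g * a * K * (m / s)) by (field; lra).
  assert (Hmw : m / s <= w) by (unfold w; apply Rmult_le_compat_r; [apply Rlt_le, Rinv_0_lt_compat|]; lra).
  assert (0 <= m / s) by (apply Rmult_le_pos; [|apply Rlt_le, Rinv_0_lt_compat]; lra).
  assert (0 <= q ^ 2) by apply pow2_ge_0.
  assert (0 < g * a) by nra.
  replace (g * a / s * (K * m - q ^ 2 * s * (B * a * g + U)))
    with (g * a * K * (m / s) - B * (g * a) ^ 2 * q ^ 2 - U * (g * a) * q ^ 2) by (field; lra).
  replace (tpp * (g * (a * q)) ^ 2 + t1 * (g * ((a * q) ^ 2 + a * (w - q ^ 2))))
    with (tpp * (g * a) ^ 2 * q ^ 2 + t1 * (g * a) * a * q ^ 2 + t1 * (g * a) * w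
          - t1 * (g * a) * q ^ 2) by ring.
  assert (HX : 0 <= (g * a) ^ 2 * q ^ 2) by (apply Rmult_le_pos; [apply pow2_ge_0 | lra]).
  assert (0 <= (tpp + B) * ((g * a) ^ 2 * q ^ 2)) by (apply Rmult_le_pos; lra).
  assert (0 <= t1 * a * ((g * a) * q ^ 2)) by (apply Rmult_le_pos; [|apply Rmult_le_pos]; nra).
  assert (K * (m / s) <= t1 * w) by (apply Rmult_le_compat; lra).
  assert (g * a * (K * (m / s)) <= g * a * (t1 * w)) by (apply Rmult_le_compat_l; lra).
  assert ((t1 - U) * ((g * a) * q ^ 2) <= 0) by (apply Rmult_le_0_r; [lra | apply Rmult_le_pos; lra]).
  lra.
Qed.

Section CompositeConvexity.

Variables (T dT S S1 S2 : R -> R) (a rho K U B m : R).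
Hypothesis Ha : 0 < a.
Hypothesis HS : forall t, is_derive S t (S1 t).
Hypothesis HS1 : forall t, is_derive S1 t (S2 t).
Hypothesis HSpos : forall t, 0 < S t.

Definition root_sum (t : R) : R := Rpower (S t) a.

Definition root_sum_d1 (t : R) : R := root_sum t * (a * (S1 t / S t)).

Definition root_sum_d2 (t : R) : R :=
  root_sum t * ((a * (S1 t / S t)) ^ 2 + a * (S2 t / S t - (S1 t / S t) ^ 2)).

Lemma root_sum_pos t : 0 < root_sum t.
Proof. apply exp_pos. Qed.

Lemma root_sum_derive t : is_derive root_sum t (root_sum_d1 t).
Proof.
  unfold root_sum_d1, root_sum, Rpower; specialize (HSpos t).
  auto_derive; [repeat split; [eexists; apply HS | lra] |].
  replace (Derive (fun x => S x) t) with (S1 t) by (symmetry; apply is_derive_unique, HS).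
  field; lra.
Qed.

Lemma root_sum_d1_derive t : is_derive root_sum_d1 t (root_sum_d2 t).
Proof.
  unfold root_sum_d2, root_sum_d1, root_sum, Rpower; specialize (HSpos t).
  auto_derive; [repeat split; try (eexists; apply HS || apply HS1); lra |].
  replace (Derive (fun x => S x) t) with (S1 t) by (symmetry; apply is_derive_unique, HS).
  replace (Derive (fun x => S1 x) t) with (S2 t) by (symmetry; apply is_derive_unique, HS1).
  field; lra.
Qed.

Definition gather_cost (A va D y : R) : R := A + y + va * (T (root_sum y + rho) + D).

Definition gather_cost_d1 (va y : R) : R := 1 + va * (dT (root_sum y + rho) * root_sum_d1 y).

Definition gather_cost_d2 (va y : R) : R :=
  va * (Derive dT (root_sum y + rho) * root_sum_d1 y ^ 2 + dT (root_sum y + rho) * root_sum_d2 y).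

Hypothesis HT : forall r, rho < r -> is_derive T r (dT r).
Hypothesis HdT : forall r, rho < r -> ex_derive dT r /\ Rabs (Derive dT r) <= B.

(* Since g > 0, T is only evaluated beyond rho. *)
Lemma root_sum_shift y : rho < root_sum y + rho.
Proof. assert (H := root_sum_pos y); lra. Qed.

Lemma gather_cost_derive A va D y : is_derive (gather_cost A va D) y (gather_cost_d1 va y).
Proof.
  assert (HTy := HT _ (root_sum_shift y)); assert (Hg := root_sum_derive y).
  unfold gather_cost, gather_cost_d1; auto_derive; [split; [eexists|split; [eexists|]]; eauto |].
  replace (Derive (fun x => T x) (root_sum y + rho)) with (dT (root_sum y + rho))
    by (symmetry; now apply is_derive_unique).
  replace (Derive (fun x => root_sum x) y) with (root_sum_d1 y)
    by (symmetry; now apply is_derive_unique).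
  ring.
Qed.

Lemma gather_cost_d1_derive va y : is_derive (gather_cost_d1 va) y (gather_cost_d2 va y).
Proof.
  destruct (HdT _ (root_sum_shift y)) as [[dT' HdTy] _].
  assert (Hg := root_sum_derive y); assert (Hg1 := root_sum_d1_derive y).
  unfold gather_cost_d1, gather_cost_d2.
  auto_derive; [repeat split; [exists dT' | eexists | eexists]; eauto |].
  change (Derive (fun x => dT x)) with (Derive dT).
  replace (Derive (fun x => root_sum x) y) with (root_sum_d1 y)
    by (symmetry; now apply is_derive_unique).
  replace (Derive (fun x => root_sum_d1 x) y) with (root_sum_d2 y)
    by (symmetry; now apply is_derive_unique).
  ring.
Qed.

Lemma gather_cost_second A va D y :
  ex_derive_n (gather_cost A va D) 2 y /\ Derive_n (gather_cost A va D) 2 y = gather_cost_d2 va y.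
Proof.
  assert (H1 : forall t, Derive_n (gather_cost A va D) 1 t = gather_cost_d1 va t)
    by (intro t; apply is_derive_unique, gather_cost_derive).
  split.
  - apply (ex_derive_ext (gather_cost_d1 va)); [intro t; now rewrite H1|].
    eexists; apply gather_cost_d1_derive.
  - change (Derive (Derive_n (gather_cost A va D) 1) y = gather_cost_d2 va y).
    rewrite (Derive_ext _ _ _ H1); apply is_derive_unique, gather_cost_d1_derive.
Qed.

Definition crit_margin (t : R) : R := S1 t ^ 2 / S t * (B * a * root_sum t + U).

Lemma crit_margin_continuous t : continuous crit_margin t.
Proof.
  apply (ex_derive_continuous crit_margin); unfold crit_margin, root_sum, Rpower.
  specialize (HSpos t).
  auto_derive; repeat split; try (eexists; apply HS || apply HS1); lra.
Qed.

Lemma critical_point_S1 x0 : is_derive root_sum x0 0 -> S1 x0 = 0.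
Proof.
  intros Hcrit; assert (Hd1 : root_sum_d1 x0 = 0).
  { rewrite <- (is_derive_unique _ _ _ (root_sum_derive x0)); now apply is_derive_unique. }
  unfold root_sum_d1 in Hd1; assert (Hg := root_sum_pos x0); specialize (HSpos x0).
  apply Rmult_integral in Hd1; destruct Hd1 as [|Hd1]; [lra|].
  apply Rmult_integral in Hd1; destruct Hd1 as [|Hd1]; [lra|].
  unfold Rdiv in Hd1; apply Rmult_integral in Hd1; destruct Hd1 as [|Hd1]; [assumption|].
  exfalso; apply (Rinv_neq_0_compat (S x0)); lra.
Qed.

Hypothesis HK : 0 < K.
Hypothesis Hm : 0 < m.
Hypothesis HdT_range : forall r, rho < r -> K <= dT r <= U.
Hypothesis HS2 : forall t, m <= S2 t.

Lemma gather_cost_d2_lower va y : 0 <= va ->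
  va * (root_sum y * a / S y * (K * m - crit_margin y)) <= gather_cost_d2 va y.
Proof.
  intros Hva; unfold gather_cost_d2, root_sum_d1, root_sum_d2, crit_margin.
  apply Rmult_le_compat_l; [exact Hva|].
  destruct (HdT _ (root_sum_shift y)) as [_ HB].
  apply curvature_lower_bound; auto; try lra; [apply root_sum_pos | apply HdT_range, root_sum_shift].
Qed.

Theorem gather_cost_locally_convex A va D x0 : 0 < va -> is_derive root_sum x0 0 ->
  exists eps, 0 < eps /\ forall y, Rabs (y - x0) < eps ->
    ex_derive_n (gather_cost A va D) 2 y /\ 0 < Derive_n (gather_cost A va D) 2 y.
Proof.
  intros Hva Hcrit.
  assert (Hzero : crit_margin x0 = 0).
  { unfold crit_margin; rewrite (critical_point_S1 x0 Hcrit); specialize (HSpos x0); field; lra. }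
  destruct (continuous_lt_near crit_margin x0 (K * m) (crit_margin_continuous x0)) as [eps [Heps Hnear]];
    [rewrite Hzero; nra|].
  exists eps; split; [exact Heps|]; intros y Hy.
  destruct (gather_cost_second A va D y) as [Hex ->]; split; [exact Hex|].
  eapply Rlt_le_trans; [|apply gather_cost_d2_lower; lra].
  specialize (Hnear y Hy); assert (Hg := root_sum_pos y); specialize (HSpos y).
  apply Rmult_lt_0_compat; [lra|].
  apply Rmult_lt_0_compat; [apply Rdiv_lt_0_compat; nra | lra].
Qed.

End CompositeConvexity.

(* Lemma 2: the gathering cost is an instance of gather_cost, with S the sum of
   the delta-th powers of the defender distances and T the travel time. *)
Theorem lemma2
  (rho_p rho_ac va ud CD rho_snp DTg : R) (delta Nd : nat)
  (rd : nat -> vec3) (u : vec3) (Rstar : R)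
  (Hrho_p : 0 < rho_p) (Hrho_ac : 0 < rho_ac) (Hva : 0 < va)
  (Hud : 0 < ud) (HCD : 0 < CD) (Hsnp : 0 < rho_snp) (HDT : 0 <= DTg)
  (Hdelta : (2 <= delta)%nat) (HNd : (2 <= Nd)%nat)
  (Hdistinct : forall j j' : nat, (j < Nd)%nat -> (j' < Nd)%nat -> j <> j' ->
      0 < norm3 (sub3 (rd j) (rd j')))
  (Hu : norm3 u = 1)
  (HRpos : 0 < Rstar)
  (Hcrit : is_derive (varrho_tilde delta Nd u rd) Rstar 0) :
  exists eps : R, 0 < eps /\
    forall Rr : R, Rabs (Rr - Rstar) < eps ->
      ex_derive_n (f_gather rho_ac va ud CD rho_snp DTg delta Nd u rd) 2 Rr /\
      0 < Derive_n (f_gather rho_ac va ud CD rho_snp DTg delta Nd u rd) 2 Rr.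
Proof.
  destruct delta as [|[|k]]; [lia | lia |].
  replace (S (S k)) with (k + 2)%nat in * by lia.
  set (n := (Nd - 1)%nat).
  assert (Hn : (1 <= n)%nat) by (unfold n; lia).
  assert (Hsep : 0 < norm3 (sub3 (rd 0%nat) (rd 1%nat))) by (apply Hdistinct; lia).
  assert (Ha : 0 < / INR (k + 2)) by (apply Rinv_0_lt_compat, lt_0_INR; lia).
  set (m := INR (k + 2) * (norm3 (sub3 (rd 0%nat) (rd 1%nat)) / 2) ^ k).
  assert (Hm : 0 < m) by (apply Rmult_lt_0_compat; [apply lt_0_INR; lia | apply pow_lt; lra]).
  apply (gather_cost_locally_convex (Tbar_d ud CD) (dTbar ud CD)
           (power_sum u rd k n) (power_sum_d1 u rd k n) (power_sum_d2 u rd k n) (/ INR (k + 2))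
           rho_snp (CD / lambda0 ud CD) (dTbar ud CD rho_snp) (dTbar_lip ud CD rho_snp) m); auto.
  - intro t; now apply power_sum_derive.
  - intro t; now apply power_sum_d1_derive.
  - intro t; now apply power_sum_pos.
  - intros r Hr; apply Tbar_d_derive; lra.
  - intros r Hr; apply dTbar_derive_bound; lra.
  - apply Rdiv_lt_0_compat, lambda0_pos; auto.
  - intros r Hr; split; [apply dTbar_lower | apply dTbar_antitone]; lra.
  - intro t; now apply power_sum_d2_lower.
Qed.
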